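(* Let $\gamma>0$ and let $\mathcal{L}$ be the qubit Lindbladian with no Hamiltonian part and a single jump operator $L=\sqrt{\gamma}\,|0\rangle\langle 1|$, i.e. $\mathcal{L}(\rho)=L\rho L^\dagger-\frac12\{L^\dagger L,\rho\}$. Then $\mathcal{L}$ is not quantum programmable.
   Context: $\mathcal{L}$ generates the amplitude-damping semigroup $(e^{t\mathcal{L}})_{t\ge0}$. $\mathcal{L}$ is quantum programmable if there exist a finite-dimensional program space $\mathcal{H}_P$, a CPTP map $\mathcal{P}$ from operators on $\mathbb{C}^2\otimes\mathcal{H}_P$ to operators on $\mathbb{C}^2$, and a continuous family of density operators $(\pi_t)_{t\ge0}$ on $\mathcal{H}_P$ such that $\mathcal{P}(\rho\otimes\pi_t)=e^{t\mathcal{L}}(\rho)$ for all $t\ge0$ and all $\rho$. *)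

From HB Require Import structures.
From mathcomp Require Import all_boot all_order all_algebra.
From mathcomp Require Import complex mxtens.
From mathcomp Require Import all_classical all_reals all_analysis.
Set Implicit Arguments. Unset Strict Implicit. Unset Printing Implicit Defensive.
Import Order.TTheory GRing.Theory Num.Theory.
Import numFieldNormedType.Exports.
Local Open Scope classical_set_scope.
Local Open Scope ring_scope.

Section QDefs.
Variable R : realType.
Local Notation C := (complex R).

Definition adjmx {m n : nat} (A : 'M[C]_(m, n)) : 'M[C]_(n, m) :=
  (map_mx Num.conj A)^T.

(* positive semidefinite: <v, A v> >= 0 for all v (in C, "0 <= z" means
   z is real and nonnegative) *)
Definition psdmx {n : nat} (A : 'M[C]_n) : Prop :=
  forall v : 'cV[C]_n, 0 <= (adjmx v *m A *m v) 0 0.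

Definition density {n : nat} (A : 'M[C]_n) : Prop :=
  psdmx A /\ \tr A = 1.

(* positive semidefiniteness of a k x k block operator matrix with
   blocks in M_m, i.e. of an element of M_k(M_m) = M_k (x) M_m *)
Definition block_psd {k m : nat} (B : 'I_k -> 'I_k -> 'M[C]_m) : Prop :=
  forall v : 'I_k -> 'cV[C]_m,
    0 <= \sum_(i < k) \sum_(j < k) (adjmx (v i) *m B i j *m v j) 0 0.

(* completely positive: id_k (x) P is positive for every k *)
Definition completely_positive {m n : nat} (P : 'M[C]_m -> 'M[C]_n) : Prop :=
  forall (k : nat) (B : 'I_k -> 'I_k -> 'M[C]_m),
    block_psd B -> block_psd (fun i j => P (B i j)).

Definition trace_preserving {m n : nat} (P : 'M[C]_m -> 'M[C]_n) : Prop :=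
  forall X : 'M[C]_m, \tr (P X) = \tr X.

Definition CPTP {m n : nat} (P : 'M[C]_m -> 'M[C]_n) : Prop :=
  linear P /\ completely_positive P /\ trace_preserving P.

Definition lindblad1 {n : nat} (Lj : 'M[C]_n) (rho : 'M[C]_n) : 'M[C]_n :=
  Lj *m rho *m adjmx Lj
  - 2^-1 *: (adjmx Lj *m Lj *m rho + rho *m (adjmx Lj *m Lj)).

Definition ad_jump (gamma : R) : 'M[C]_2 :=
  ((Num.sqrt gamma)%:C)%C *: delta_mx 0 1.

Definition ad_lindbladian (gamma : R) : 'M[C]_2 -> 'M[C]_2 :=
  lindblad1 (ad_jump gamma).

(* Phi is the semigroup (t |-> e^{t L}) generated by the superoperator Lsup:
   the unique solution of Phi 0 = id, d/dt Phi t = Lsup o Phi t. *)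
Definition generated_by {n : nat} (Lsup : 'M[C]_n -> 'M[C]_n)
    (Phi : R -> 'M[C]_n -> 'M[C]_n) : Prop :=
  (forall rho, Phi 0 rho = rho) /\
  (forall (rho : 'M[C]_n) (t : R) (i j : 'I_n),
     is_derive t 1 (fun s => complex.Re (Phi s rho i j))
                   (complex.Re (Lsup (Phi t rho) i j)) /\
     is_derive t 1 (fun s => complex.Im (Phi s rho i j))
                   (complex.Im (Lsup (Phi t rho) i j))).

Definition continuous_on_nonneg {d : nat} (pi : R -> 'M[C]_d) : Prop :=
  forall i j : 'I_d,
    {within (`[0, +oo[ : set R), continuous (fun t : R => complex.Re (pi t i j))} /\
    {within (`[0, +oo[ : set R), continuous (fun t : R => complex.Im (pi t i j))}.

Definition quantum_programmable (Phi : R -> 'M[C]_2 -> 'M[C]_2) : Prop :=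
  exists (d : nat) (P : 'M[C]_(2 * d) -> 'M[C]_2) (pi : R -> 'M[C]_d),
    CPTP P /\
    (forall t, 0 <= t -> density (pi t)) /\
    continuous_on_nonneg pi /\
    (forall t, 0 <= t -> forall rho : 'M[C]_2,
        P (tensmx rho (pi t)) = Phi t rho).

End QDefs.

From HB Require Import structures.
From mathcomp Require Import all_boot all_order all_algebra.
From mathcomp Require Import complex mxtens.
From mathcomp Require Import all_classical all_reals all_analysis.
From mathcomp Require Import ring.
Import Order.TTheory GRing.Theory Num.Theory.
Import numFieldNormedType.Exports.
Local Open Scope ring_scope.

Set Implicit Arguments. Unset Strict Implicit. Unset Printing Implicit Defensive.

(* Write c_t = e^(-gamma t / 2): the amplitude-damping semigroup fixes |0><0|,
   multiplies the coherence |0><1| by c_t and the population of |1> by c_t^2.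
   Suppose P(rho (x) pi) = e^(tL) rho with P CPTP.  Two functionals that are
   nonnegative on psd matrices by complete positivity vanish at pi:
   X |-> P(|0><0| (x) X)_11, and the form of the psd 2 x 2 matrix
   [P(|a><b| (x) X)_ab]_ab at the vector (c_t, -1).  As pi_jj pi - w w^* is psd
   for a column w of pi, they also vanish at w w^*.  Read in the Choi matrix of
   P, this puts u = conj w, resp. (c_t u, -u), in the kernel of psd matrices, and
   trace preservation turns the second fact into Z u = c_t u for the d x d
   matrix Z_ij = P(|0><1| (x) |i><j|)_01, which does not depend on t.  So Z has
   infinitely many eigenvalues c_t, which is absurd. *)

Lemma sum_pred1_natr_mul (R : pzSemiRingType) (I : finType) (i : I) (F : I -> R) :
  \sum_k (k == i)%:R * F k = F i.
Proof. by under eq_bigr do rewrite mulr_natl mulrb; rewrite -big_mkcond big_pred1_eq. Qed.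

Lemma sum_I2 (V : nmodType) (F : 'I_2 -> V) : \sum_k F k = F 0 + F 1.
Proof. by rewrite big_ord_recl big_ord1; congr (F _ + F _); apply: val_inj. Qed.

Lemma sum_mxtens_index (V : nmodType) m n (F : 'I_(m * n) -> V) :
  \sum_p F p = \sum_i \sum_j F (mxtens_index (i, j)).
Proof.
rewrite pair_big /= (reindex (@mxtens_index m n)) /=; last first.
  by exists (@mxtens_unindex m n) => p _; rewrite (mxtens_indexK, mxtens_unindexK).
by apply: eq_bigr => -[i j].
Qed.

Lemma mxtrace_delta (R : pzSemiRingType) n (i j : 'I_n) :
  \tr (delta_mx i j : 'M[R]_n) = (i == j)%:R.
Proof.
rewrite /mxtrace -(sum_pred1_natr_mul i (fun k => (k == j)%:R)).
by apply: eq_bigr => k _; rewrite mxE -natrM mulnb.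
Qed.

Lemma mxtrace_tens (R : comPzRingType) m n (A : 'M[R]_m) (B : 'M[R]_n) :
  \tr (tensmx A B) = \tr A * \tr B.
Proof.
rewrite /mxtrace sum_mxtens_index mulr_suml; apply: eq_bigr => i _.
by rewrite mulr_sumr; apply: eq_bigr => j _; rewrite tensmxE.
Qed.

Lemma linear_matrix_sum_delta (R : pzRingType) (V : lmodType R) m n
    (f : 'M[R]_(m, n) -> V) (X : 'M[R]_(m, n)) :
  linear f -> f X = \sum_i \sum_j X i j *: f (delta_mx i j).
Proof.
move=> linf; have fZ := GRing.scalable_linear linf.
have [_ fD] := GRing.semilinear_linear linf.
have f0 : f 0 = 0 by have := GRing.zmod_morphism_linear linf 0 0; rewrite !subrr.
rewrite {1}(matrix_sum_delta X) (big_morph f fD f0); apply: eq_bigr => i _.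
by rewrite (big_morph f fD f0); apply: eq_bigr => j _; rewrite fZ.
Qed.

Lemma eigenvalues_uniq_size (F : fieldType) n (A : 'M[F]_n) (s : seq F) :
  uniq s -> all (eigenvalue A) s -> (size s <= n)%N.
Proof.
move=> s_uniq s_eigen; rewrite -ltnS -(size_char_poly A).
apply: max_poly_roots s_uniq; first exact/monic_neq0/char_poly_monic.
by apply/allP => a /(allP s_eigen); rewrite eigenvalue_root_char.
Qed.

Section SesquilinearForm.
Variable C : numClosedFieldType.
Local Notation "x ^*" := (Num.conj x).

Definition sform m n (x : 'cV[C]_m) (M : 'M[C]_(m, n)) (y : 'cV[C]_n) : C :=
  \sum_i \sum_j (x i 0)^* * M i j * y j 0.

Definition psd n (M : 'M[C]_n) := forall v, 0 <= sform v M v.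

Lemma sformDl m n (M : 'M[C]_(m, n)) x1 x2 y :
  sform (x1 + x2) M y = sform x1 M y + sform x2 M y.
Proof.
rewrite /sform -big_split; apply: eq_bigr => i _.
by rewrite -big_split; apply: eq_bigr => j _; rewrite mxE rmorphD /=; ring.
Qed.

Lemma sformDr m n (M : 'M[C]_(m, n)) x y1 y2 :
  sform x M (y1 + y2) = sform x M y1 + sform x M y2.
Proof.
rewrite /sform -big_split; apply: eq_bigr => i _.
by rewrite -big_split; apply: eq_bigr => j _; rewrite mxE /=; ring.
Qed.

Lemma sformZl m n (M : 'M[C]_(m, n)) s x y : sform (s *: x) M y = s^* * sform x M y.
Proof.
rewrite /sform mulr_sumr; apply: eq_bigr => i _; rewrite mulr_sumr.
by apply: eq_bigr => j _; rewrite !mxE rmorphM -!mulrA.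
Qed.

Lemma sformZr m n (M : 'M[C]_(m, n)) s x y : sform x M (s *: y) = s * sform x M y.
Proof.
rewrite /sform mulr_sumr; apply: eq_bigr => i _; rewrite mulr_sumr.
by apply: eq_bigr => j _; rewrite !mxE; ring.
Qed.

Lemma sform_sum (I J : finType) m n (M : 'M[C]_(m, n)) (x : I -> 'cV[C]_m)
    (y : J -> 'cV[C]_n) :
  sform (\sum_a x a) M (\sum_b y b) = \sum_a \sum_b sform (x a) M (y b).
Proof.
have sform0l z : sform 0 M z = 0 by have := sformZl M 0 0 z; rewrite scale0r rmorph0 mul0r.
have sform0r z : sform z M 0 = 0 by have := sformZr M 0 z 0; rewrite scale0r mul0r.
rewrite (big_morph (fun u => sform u M _) (fun u v => sformDl M u v _) (sform0l _)).
apply: eq_bigr => a _.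
exact: (big_morph (fun v => sform _ M v) (fun u v => sformDr M _ u v) (sform0r _)).
Qed.

Lemma sform_expand n (x y : 'cV[C]_n) M s :
  sform (x + s *: y) M (x + s *: y) =
  sform x M x + s * sform x M y + s^* * sform y M x + s^* * s * sform y M y.
Proof.
rewrite /sform !mulr_sumr -!big_split /=; apply: eq_bigr => i _.
rewrite !mulr_sumr -!big_split /=; apply: eq_bigr => j _.
rewrite !mxE rmorphD rmorphM /=; ring.
Qed.

Lemma psd_sform_conj n (M : 'M[C]_n) x y : psd M -> sform y M x = (sform x M y)^*.
Proof.
move=> psdM; have px := geC0_conj (psdM x); have py := geC0_conj (psdM y).
move: (sform x M x) (sform y M y) px py (sform_expand x y M) => p q px py expand.
move: (sform x M y) (sform y M x) expand => a b expand.
have real_cross s : s^* * a^* + s * b^* = s * a + s^* * b.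
  have /geC0_conj := psdM (x + s *: y); rewrite expand.
  rewrite !rmorphD !rmorphM /= conjCK px py => E.
  have -> : s^* * a^* + s * b^* = p + s^* * a^* + s * b^* + s * s^* * q - p - s * s^* * q.
    by ring.
  by rewrite E; ring.
have E1 := real_cross 1; have Ei := real_cross 'i.
rewrite rmorph1 conjCi in E1 Ei.
have nz : 'i * 2%:R != 0 :> C by rewrite mulf_neq0 ?neq0Ci ?pnatr_eq0.
apply: (mulfI nz); apply/eqP; rewrite -subr_eq0; apply/eqP.
transitivity (('i * (1 * a + 1 * b) - ('i * a + - 'i * b))
  - ('i * (1 * a^* + 1 * b^*) - (- 'i * a^* + 'i * b^*))); first by ring.
by rewrite -E1 -Ei; ring.
Qed.

Lemma psd_cauchy_schwarz n (M : 'M[C]_n) x y : psd M ->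
  sform x M y * (sform x M y)^* <= sform x M x * sform y M y.
Proof.
move=> psdM; have yx := psd_sform_conj x y psdM.
have a0 := psdM x; have m0 := psdM y.
have line s : 0 <= sform x M x + s * sform x M y + s^* * (sform x M y)^*
                    + s^* * s * sform y M y.
  by have := psdM (x + s *: y); rewrite sform_expand yx.
move: (sform x M x) (sform y M y) (sform x M y) a0 m0 line => a m b a0 m0 line.
have [m_eq0|m_neq0] := eqVneq m 0.
- rewrite m_eq0 mulr0; have [->|b_neq0] := eqVneq b 0; first by rewrite mul0r.
  have := line (- ((a + 1) / (2%:R * b))); rewrite m_eq0 mulr0 addr0.
  have -> : (- ((a + 1) / (2%:R * b)))^* = - ((a^* + 1) / (2%:R * b^*)).
    by rewrite rmorphN fmorph_div rmorphD rmorphM rmorph1 rmorph_nat.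
  rewrite (geC0_conj a0).
  have -> : a + - ((a + 1) / (2%:R * b)) * b + - ((a + 1) / (2%:R * b^*)) * b^* = -1.
    by field; rewrite ?conjC_eq0 ?b_neq0 ?pnatr_eq0.
  by rewrite oppr_ge0 ler10.
- have m_gt0 : 0 < m by rewrite lt_def m_neq0 m0.
  have := line (- (b^* / m)).
  have -> : (- (b^* / m))^* = - (b^*^* / m^*) by rewrite rmorphN fmorph_div.
  rewrite conjCK (geC0_conj m0).
  have -> : a + - (b^* / m) * b + - (b / m) * b^* + - (b / m) * - (b^* / m) * m
            = a - b * b^* / m by field.
  by rewrite subr_ge0 ler_pdivrMr.
Qed.

Lemma sform_delta_l m n (M : 'M[C]_(m, n)) i y : sform (delta_mx i 0) M y = (M *m y) i 0.
Proof.
rewrite /sform [RHS]mxE -(sum_pred1_natr_mul i (fun k => \sum_j M k j * y j 0)).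
apply: eq_bigr => k _.
by rewrite mulr_sumr; apply: eq_bigr => j _; rewrite mxE andbT rmorph_nat mulrA.
Qed.

Lemma psd_sform_eq0 n (M : 'M[C]_n) y : psd M -> sform y M y = 0 -> M *m y = 0.
Proof.
move=> psdM y0; apply/matrixP => i k; rewrite (ord1 k) [RHS]mxE.
have := psd_cauchy_schwarz (delta_mx i 0) y psdM.
rewrite y0 mulr0 sform_delta_l -normCK => le0.
by apply/eqP; rewrite -normr_eq0 -sqrf_eq0 eq_le le0 exprn_ge0.
Qed.

Definition dot n (x y : 'cV[C]_n) : C := \sum_i (x i 0)^* * y i 0.

Lemma dotC n (x y : 'cV[C]_n) : dot y x = (dot x y)^*.
Proof.
rewrite /dot rmorph_sum; apply: eq_bigr => i _.
by rewrite rmorphM mulrC; congr (_ * _); apply/esym/conjCK.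
Qed.

Lemma dotDr n (x y z : 'cV[C]_n) : dot x (y + z) = dot x y + dot x z.
Proof. by rewrite /dot -big_split; apply: eq_bigr => i _; rewrite mxE mulrDr. Qed.

Lemma dot_col_mx m n (x0 z0 : 'cV[C]_m) (x1 z1 : 'cV[C]_n) :
  dot (col_mx x0 x1) (col_mx z0 z1) = dot x0 z0 + dot x1 z1.
Proof.
by rewrite /dot big_split_ord; congr (_ + _); apply: eq_bigr => i _;
  rewrite ?col_mxEu ?col_mxEd.
Qed.

Lemma sform_dot m n (M : 'M[C]_(m, n)) x y : sform x M y = dot x (M *m y).
Proof.
rewrite /sform /dot; apply: eq_bigr => i _; rewrite mxE mulr_sumr.
by apply: eq_bigr => j _; rewrite mulrA.
Qed.

Lemma sform_block n (x0 x1 y0 y1 : 'cV[C]_n) (A B D E : 'M[C]_n) :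
  sform (col_mx x0 x1) (block_mx A B D E) (col_mx y0 y1)
  = sform x0 A y0 + sform x0 B y1 + (sform x1 D y0 + sform x1 E y1).
Proof. by rewrite !sform_dot mul_block_col dot_col_mx !dotDr. Qed.

Lemma sform_delta_r m n (M : 'M[C]_(m, n)) x j : sform x M (delta_mx j 0) = dot x (col j M).
Proof.
rewrite /sform /dot; apply: eq_bigr => i _; rewrite mxE.
rewrite -(sum_pred1_natr_mul j (fun k => (x i 0)^* * M i k)).
by apply: eq_bigr => k _; rewrite mxE andbT mulrC mulrA.
Qed.

Lemma sform_delta m n (M : 'M[C]_(m, n)) i j : sform (delta_mx i 0) M (delta_mx j 0) = M i j.
Proof. by rewrite sform_delta_l -colE mxE. Qed.

Definition outer n (x y : 'cV[C]_n) : 'M[C]_n := \matrix_(i, j) (x i 0 * (y j 0)^*).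

Lemma sform_outer n (u x y v : 'cV[C]_n) : sform u (outer x y) v = dot u x * dot y v.
Proof.
rewrite /sform /dot mulr_suml; apply: eq_bigr => i _.
by rewrite mulr_sumr; apply: eq_bigr => j _; rewrite mxE; ring.
Qed.

Lemma psd_outer n (x : 'cV[C]_n) : psd (outer x x).
Proof. by move=> v; rewrite sform_outer (dotC v x) mul_conjC_ge0. Qed.

Lemma psd_schur_col n (M : 'M[C]_n) j : psd M ->
  psd (M j j *: M - outer (col j M) (col j M)).
Proof.
move=> psdM v.
have -> : sform v (M j j *: M - outer (col j M) (col j M)) v
          = M j j * sform v M v - sform v (outer (col j M) (col j M)) v.
  rewrite /sform mulr_sumr -sumrB; apply: eq_bigr => i _.
  by rewrite mulr_sumr -sumrB; apply: eq_bigr => k _; rewrite !mxE; ring.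
rewrite sform_outer (dotC v) -sform_delta_r subr_ge0 [M j j * _]mulrC -(sform_delta M j j).
exact: psd_cauchy_schwarz.
Qed.

Lemma psd_functional_outer_col n (phi : 'M[C]_n -> C) (M : 'M[C]_n) j :
  (forall s X Y, phi (s *: X - Y) = s * phi X - phi Y) ->
  (forall X, psd X -> 0 <= phi X) ->
  psd M -> phi M = 0 -> phi (outer (col j M) (col j M)) = 0.
Proof.
move=> phiB phi_ge0 psdM phiM.
have := phi_ge0 _ (psd_schur_col j psdM); rewrite phiB phiM mulr0 sub0r oppr_ge0.
by move=> le0; apply/eqP; rewrite eq_le le0 (phi_ge0 _ (psd_outer _)).
Qed.

End SesquilinearForm.

Section QuantumBlocks.
Variable R : realType.
Local Notation C := (complex R).
Local Notation "x ^*" := (Num.conj x).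

Lemma adjmx_sform n (x y : 'cV[C]_n) M : (adjmx x *m M *m y) 0 0 = sform x M y.
Proof.
rewrite /sform mxE; under eq_bigr => j _ do rewrite mxE mulr_suml.
by rewrite exchange_big; apply: eq_bigr => i _; apply: eq_bigr => j _; rewrite !mxE.
Qed.

Lemma psdmxE n (M : 'M[C]_n) : psdmx M <-> psd M.
Proof. by split => psdM v; have := psdM v; rewrite adjmx_sform. Qed.

Definition slice n (a : 'I_2) (u : 'cV[C]_(2 * n)) : 'cV[C]_n :=
  \col_i u (mxtens_index (a, i)) 0.

Lemma sform_tens n (a b : 'I_2) (u v : 'cV[C]_(2 * n)) (M : 'M[C]_n) :
  sform u (tensmx (delta_mx a b) M) v = sform (slice a u) M (slice b v).
Proof.
rewrite /sform sum_mxtens_index.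
transitivity (\sum_a' (a' == a)%:R * \sum_i \sum_b' (b' == b)%:R * \sum_j
   (u (mxtens_index (a', i)) 0)^* * M i j * v (mxtens_index (b', j)) 0).
  apply: eq_bigr => a' _; rewrite mulr_sumr; apply: eq_bigr => i _.
  rewrite sum_mxtens_index mulr_sumr; apply: eq_bigr => b' _.
  rewrite !mulr_sumr; apply: eq_bigr => j _; rewrite tensmxE mxE.
  by case: (a' == a); case: (b' == b); rewrite /= ?(mul1r, mulr1, mul0r, mulr0).
rewrite (sum_pred1_natr_mul a (fun a' => \sum_i \sum_b' (b' == b)%:R * \sum_j
   (u (mxtens_index (a', i)) 0)^* * M i j * v (mxtens_index (b', j)) 0)).
apply: eq_bigr => i _.
rewrite (sum_pred1_natr_mul b (fun b' => \sum_j _ * M i j * v (mxtens_index (b', j)) 0)).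
by apply: eq_bigr => j _; rewrite !mxE.
Qed.

Lemma block_psd_tens n (X : 'M[C]_n) :
  psd X -> block_psd (fun a b : 'I_2 => tensmx (delta_mx a b) X).
Proof.
move=> psdX v.
under eq_bigr => a _ do under eq_bigr => b _ do rewrite adjmx_sform sform_tens.
by rewrite -sform_sum.
Qed.

Lemma block_psd_outer n (x : 'I_2 -> 'cV[C]_n) :
  block_psd (fun a b : 'I_2 => tensmx (delta_mx a b) (outer (x a) (x b))).
Proof.
move=> v.
under eq_bigr => a _ do under eq_bigr => b _ do rewrite adjmx_sform sform_tens sform_outer.
rewrite -big_distrlr /= [X in _ * X](eq_bigr (fun b => (dot (slice b (v b)) (x b))^*)).
  by rewrite -rmorph_sum; exact: mul_conjC_ge0.
by move=> b _; rewrite dotC.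
Qed.

End QuantumBlocks.

Section ProgramMap.
Variable R : realType.
Local Notation C := (complex R).
Local Notation "x ^*" := (Num.conj x).
Variables (d : nat) (P : 'M[C]_(2 * d) -> 'M[C]_2).
Hypotheses (linP : linear P) (cpP : completely_positive P) (tpP : trace_preserving P).

Definition Pblock (a b : 'I_2) (X : 'M[C]_d) : 'M[C]_2 := P (tensmx (delta_mx a b) X).

Definition choi (a b k l : 'I_2) : 'M[C]_d :=
  \matrix_(i, j) Pblock a b (delta_mx i j) k l.

Lemma Pblock_linear a b : linear (Pblock a b).
Proof.
move=> s X Y; rewrite /Pblock -linP; congr P.
by apply/matrixP => p q; rewrite !mxE; ring.
Qed.

Lemma PblockB a b s X Y : Pblock a b (s *: X - Y) = s *: Pblock a b X - Pblock a b Y.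
Proof.
rewrite (GRing.zmod_morphism_linear (Pblock_linear a b)).
by rewrite (GRing.scalable_linear (Pblock_linear a b)).
Qed.

Lemma Pblock_expand a b k l X :
  Pblock a b X k l = \sum_i \sum_j X i j * choi a b k l i j.
Proof.
rewrite (linear_matrix_sum_delta X (Pblock_linear a b)) summxE; apply: eq_bigr => i _.
by rewrite summxE; apply: eq_bigr => j _; rewrite !mxE.
Qed.

Lemma sform_choi a b k l x y :
  sform x (choi a b k l) y = Pblock a b (outer (map_mx Num.conj x) (map_mx Num.conj y)) k l.
Proof.
rewrite Pblock_expand /sform; apply: eq_bigr => i _; apply: eq_bigr => j _.
by rewrite !mxE conjCK; ring.
Qed.

Lemma choi_trace : choi 0 0 0 0 + choi 0 0 1 1 = 1%:M.
Proof.
apply/matrixP => i j; rewrite !mxE.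
transitivity (\tr (P (tensmx (delta_mx 0 0) (delta_mx i j)))); first by rewrite /mxtrace sum_I2.
by rewrite tpP mxtrace_tens !mxtrace_delta eqxx mul1r.
Qed.

Lemma Pblock_form_ge0 X (s0 s1 : C) (k0 k1 : 'I_2) : psd X ->
  0 <= s0^* * (s0 * Pblock 0 0 X k0 k0) + s0^* * (s1 * Pblock 0 1 X k0 k1)
       + (s1^* * (s0 * Pblock 1 0 X k1 k0) + s1^* * (s1 * Pblock 1 1 X k1 k1)).
Proof.
move=> psdX; have := cpP (block_psd_tens psdX)
  (fun a => if a == 0 then s0 *: delta_mx k0 0 else s1 *: delta_mx k1 0).
under eq_bigr => a _ do under eq_bigr => b _ do rewrite adjmx_sform.
by rewrite !sum_I2 /= !sformZl !sformZr !sform_delta.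
Qed.

Lemma Pblock00_11_ge0 X : psd X -> 0 <= Pblock 0 0 X 1 1.
Proof.
move=> psdX; have := Pblock_form_ge0 1 0 1 1 psdX.
by rewrite rmorph1 rmorph0 !mul0r !mul1r !addr0.
Qed.

Lemma psd_choi00_11 : psd (choi 0 0 1 1).
Proof. by move=> v; rewrite sform_choi; apply: Pblock00_11_ge0; apply: psd_outer. Qed.

Lemma Pblock_outer_form_ge0 (x0 x1 : 'cV[C]_d) :
  0 <= Pblock 0 0 (outer x0 x0) 0 0 + Pblock 0 1 (outer x0 x1) 0 1
       + (Pblock 1 0 (outer x1 x0) 1 0 + Pblock 1 1 (outer x1 x1) 1 1).
Proof.
have := cpP (block_psd_outer (fun a => if a == 0 then x0 else x1)) (fun a => delta_mx a 0).
under eq_bigr => a _ do under eq_bigr => b _ do rewrite adjmx_sform sform_delta.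
by rewrite !sum_I2.
Qed.

Definition coupling_form (c : C) (X : 'M[C]_d) : C :=
  c^* * (c * Pblock 0 0 X 0 0) - c^* * Pblock 0 1 X 0 1
  - c * Pblock 1 0 X 1 0 + Pblock 1 1 X 1 1.

Lemma coupling_form_ge0 c X : psd X -> 0 <= coupling_form c X.
Proof.
move=> psdX; have := Pblock_form_ge0 c (-1) 0 1 psdX.
by rewrite /coupling_form rmorphN rmorph1 /=; congr (0 <= _); ring.
Qed.

Lemma coupling_formB c s X Y :
  coupling_form c (s *: X - Y) = s * coupling_form c X - coupling_form c Y.
Proof. by rewrite /coupling_form !PblockB !mxE; ring. Qed.

(* The principal submatrix of the Choi matrix
   sum |a i><b j| (x) P(|a><b| (x) |i><j|) of P on the vectors |a i> (x) |a>. *)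
Definition coupling : 'M[C]_(d + d) :=
  block_mx (choi 0 0 0 0) (choi 0 1 0 1) (choi 1 0 1 0) (choi 1 1 1 1).

Lemma psd_coupling : psd coupling.
Proof. by move=> y; rewrite -(vsubmxK y) sform_block !sform_choi Pblock_outer_form_ge0. Qed.

Lemma sform_coupling c u :
  sform (col_mx (c *: u) (- u)) coupling (col_mx (c *: u) (- u))
  = coupling_form c (outer (map_mx Num.conj u) (map_mx Num.conj u)).
Proof.
rewrite -scaleN1r sform_block !sformZl !sformZr !sform_choi /coupling_form.
by rewrite rmorphN rmorph1 /=; ring.
Qed.

Lemma choi_coherence_eigenvector (pi : 'M[C]_d) (c : C) :
  psd pi -> \tr pi = 1 ->
  Pblock 0 0 pi 0 0 = 1 -> Pblock 0 0 pi 1 1 = 0 -> Pblock 0 1 pi 0 1 = c ->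
  Pblock 1 0 pi 1 0 = c^* -> Pblock 1 1 pi 1 1 = c^* * c ->
  exists2 u : 'cV[C]_d, u != 0 & choi 0 1 0 1 *m u = c *: u.
Proof.
move=> psdpi trpi P00 P11 P01 P10 Pcc.
have [j pijj] : exists j, pi j j != 0.
  apply/existsP; apply: contraLR (oner_neq0 C) => /existsPn pi_diag0.
  by rewrite negbK -trpi; apply/eqP/big1 => k _; apply/eqP/negbNE/pi_diag0.
set w := col j pi; set u := map_mx Num.conj w.
have wE : map_mx Num.conj u = w by apply/matrixP => i k; rewrite !mxE conjCK.
have u_neq0 : u != 0.
  apply: contraNneq pijj => /(congr1 (fun v : 'cV[C]_d => v j 0)) /eqP.
  by rewrite !mxE conjC_eq0.
have leak0 : Pblock 0 0 (outer w w) 1 1 = 0.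
  apply: (psd_functional_outer_col (phi := fun X => Pblock 0 0 X 1 1)) => //.
    by move=> s X Y; rewrite PblockB !mxE.
  exact: Pblock00_11_ge0.
have form0 : coupling_form c (outer w w) = 0.
  apply: psd_functional_outer_col => //; [exact: coupling_formB | exact: coupling_form_ge0 |].
  by rewrite /coupling_form P00 P01 P10 Pcc; ring.
have leak_u : choi 0 0 1 1 *m u = 0.
  by apply: psd_sform_eq0 psd_choi00_11 _; rewrite sform_choi wE.
have : coupling *m col_mx (c *: u) (- u) = 0.
  by apply: psd_sform_eq0 psd_coupling _; rewrite sform_coupling wE.
rewrite mul_block_col => /eqP; rewrite col_mx_eq0 => /andP [/eqP top _].
have choi_u : choi 0 0 0 0 *m u = u.
  by rewrite -[choi 0 0 0 0](addrK (choi 0 0 1 1)) choi_trace mulmxBl leak_u mul1mx subr0.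
exists u => //; apply/eqP; rewrite eq_sym -subr_eq0 -top.
by rewrite -scalemxAr choi_u mulmxN.
Qed.

End ProgramMap.

Section AmplitudeDamping.
Variable R : realType.
Local Notation C := (complex R).
Local Notation "x ^*" := (Num.conj x).
Local Notation "x %:C" := (x%:C)%C.

Lemma linear_ode_expR (f : R -> R) (k : R) :
  (forall t : R, is_derive t (1 : R) f (k * f t)) -> forall t, f t = f 0 * expR (k * t).
Proof.
move=> f'E t; pose g s := f s * expR (- (k * s)).
have g'0 (s : R) : is_derive s (1 : R) g 0.
  have f' := f'E s.
  have e' : is_derive s (1 : R) (fun s => expR (- (k * s))) (expR (- (k * s)) * - k).
    by apply: trigger_derive; rewrite /GRing.scale /= mulr1.
  by apply: trigger_derive; rewrite /GRing.scale /=; ring.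
have := @is_derive_0_is_cst _ g t 0 g'0; rewrite /g mulr0 oppr0 expR0 mulr1 => <-.
by rewrite -mulrA -expRD addNr expR0 mulr1.
Qed.

Lemma generated_entry_expR (L : 'M[C]_2 -> 'M[C]_2) Phi rho i j (k : R) :
  generated_by L Phi ->
  (forall t, L (Phi t rho) i j = k%:C * Phi t rho i j) ->
  forall t : R, Phi t rho i j = (expR (k * t))%:C * rho i j.
Proof.
move=> [Phi0 Phi'] LE t.
have ReE z : complex.Re (k%:C * z) = k * complex.Re z by case: z => a b /=; ring.
have ImE z : complex.Im (k%:C * z) = k * complex.Im z by case: z => a b /=; ring.
have reE := @linear_ode_expR (fun s => complex.Re (Phi s rho i j)) k.
have imE := @linear_ode_expR (fun s => complex.Im (Phi s rho i j)) k.
have [re' im'] : (forall s : R, is_derive s (1 : R) (fun s => complex.Re (Phi s rho i j))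
                                      (k * complex.Re (Phi s rho i j))) /\
                 (forall s : R, is_derive s (1 : R) (fun s => complex.Im (Phi s rho i j))
                                      (k * complex.Im (Phi s rho i j))).
  by split=> s; have [re im] := Phi' rho s i j; rewrite LE ?ReE ?ImE in re im.
move: (reE re' t) (imE im' t); rewrite /= Phi0.
case: (Phi t rho i j) => a b /= -> ->; case: (rho i j) => x y.
by apply/eqP; rewrite eq_complex /=; apply/andP; split; apply/eqP; ring.
Qed.

Lemma ad_lindbladian_entries (g : R) (rho : 'M[C]_2) : 0 <= g ->
  [/\ ad_lindbladian g rho 0 0 = g%:C * rho 1 1,
      ad_lindbladian g rho 1 1 = (- g)%:C * rho 1 1,
      ad_lindbladian g rho 0 1 = (- (g / 2))%:C * rho 0 1 &
      ad_lindbladian g rho 1 0 = (- (g / 2))%:C * rho 1 0].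
Proof.
move=> g0; set s := (Num.sqrt g)%:C.
have ss : g%:C = s * s by rewrite /s -rmorphM /= -expr2 sqr_sqrtr.
have gN : (- g)%:C = - (s * s) by rewrite -ss rmorphN.
have g2 : (- (g / 2))%:C = - (s * s / 2) by rewrite -ss rmorphN rmorphM fmorphV rmorph_nat.
have adjL : adjmx (s *: delta_mx 0 1 : 'M[C]_2) = s *: delta_mx 1 0.
  apply/matrixP => i j; rewrite !mxE rmorphM rmorph_nat andbC.
  by congr (_ * _); apply: conjc_real.
rewrite gN g2 ss /ad_lindbladian /lindblad1 /ad_jump -/s adjL.
by split; rewrite !mxE !sum_I2 !mxE !sum_I2 !mxE /=; field.
Qed.

Lemma ad_semigroup_entries (g : R) Phi (rho : 'M[C]_2) (t : R) :
  0 <= g -> generated_by (ad_lindbladian g) Phi ->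
  [/\ Phi t rho 1 1 = (expR (- g * t))%:C * rho 1 1,
      Phi t rho 0 1 = (expR (- (g / 2) * t))%:C * rho 0 1,
      Phi t rho 1 0 = (expR (- (g / 2) * t))%:C * rho 1 0 &
      rho 1 1 = 0 -> Phi t rho 0 0 = rho 0 0].
Proof.
move=> g0 gen; have L s := ad_lindbladian_entries (Phi s rho) g0.
have E11 s : Phi s rho 1 1 = (expR (- g * s))%:C * rho 1 1.
  by apply: (generated_entry_expR gen) => s'; have [] := L s'.
split=> //; try by apply: (generated_entry_expR gen) => s; have [] := L s.
move=> rho11; have := generated_entry_expR (rho := rho) (i := 0) (j := 0) (k := 0) gen _ t.
rewrite mul0r expR0 rmorph1 mul1r; apply=> s.
by have [-> _ _ _] := L s; rewrite E11 rho11 rmorph0 !(mulr0, mul0r).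
Qed.

Lemma ad_program_eigenvalue (gamma : R) Phi d (P : 'M[C]_(2 * d) -> 'M[C]_2)
    (pi : 'M[C]_d) (t : R) :
  0 <= gamma -> generated_by (ad_lindbladian gamma) Phi -> CPTP P -> density pi ->
  (forall rho, P (tensmx rho pi) = Phi t rho) ->
  eigenvalue (choi P 0 1 0 1)^T (expR (- (gamma / 2) * t))%:C.
Proof.
move=> g0 gen [linP [cpP tpP]] [/psdmxE psdpi trpi] prog.
set c := (expR (- (gamma / 2) * t))%:C.
have cc : c^* = c by exact: conjc_real.
have entries a b := ad_semigroup_entries (delta_mx a b) t g0 gen.
have [u u_neq0 Zu] : exists2 u : 'cV[C]_d, u != 0 & choi P 0 1 0 1 *m u = c *: u.
  apply: (choi_coherence_eigenvector linP cpP tpP psdpi trpi); rewrite /Pblock prog.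
  - by have [_ _ _ ->] := entries 0 0; rewrite mxE.
  - by have [-> _ _ _] := entries 0 0; rewrite mxE mulr0.
  - by have [_ -> _ _] := entries 0 1; rewrite mxE mulr1.
  - by have [_ _ -> _] := entries 1 0; rewrite mxE mulr1 cc.
  have [-> _ _ _] := entries 1 1; rewrite mxE mulr1 cc -rmorphM -expRD.
  by congr (expR _)%:C; field.
apply/eigenvalueP; exists u^T; last by rewrite trmx_eq0.
by rewrite -trmx_mul Zu linearZ.
Qed.

End AmplitudeDamping.

Theorem proposition2 (R : realType) (gamma : R) (hgamma : 0 < gamma)
    (Phi : R -> 'M[complex R]_2 -> 'M[complex R]_2) :
  generated_by (ad_lindbladian gamma) Phi ->
  ~ quantum_programmable Phi.
Proof.
move=> gen [d [P [pi [CPTP_P [pi_density [_ prog]]]]]].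
pose c (k : nat) : complex R := (expR (- (gamma / 2) * k%:R))%:C%C.
have c_inj : injective c.
  have rate_neq0 : - (gamma / 2) != 0 by rewrite oppr_eq0 mulf_neq0 ?invr_eq0 ?gt_eqF.
  move=> a b /(congr1 (@complex.Re R)) /expR_inj /(mulfI rate_neq0) /eqP.
  by rewrite eqr_nat => /eqP.
suff : (d.+1 <= d)%N by rewrite ltnn.
have := @eigenvalues_uniq_size _ _ (choi P 0 1 0 1)^T [seq c k | k <- iota 0 d.+1].
rewrite size_map size_iota; apply; first by rewrite map_inj_uniq ?iota_uniq.
apply/allP => _ /mapP [k _ ->]; have k_ge0 : 0 <= k%:R :> R := ler0n _ k.
exact: ad_program_eigenvalue (ltW hgamma) gen CPTP_P (pi_density _ k_ge0) (prog _ k_ge0).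
Qed.
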